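(* Let $(\mathcal{C},\otimes,I,c)$ be a symmetric monoidal category with symmetry $c$, and let $(!,\delta,\varepsilon,m,m_I,d,e)$ be a linear exponential comonad on the underlying monoidal category $(\mathcal{C},\otimes,I)$. Then it is a symmetric linear exponential comonad if and only if $\sigma_{X,Y}=c_{!X,!Y}$ for all objects $X,Y$, where $\sigma_{X,Y}$ is the morphism defined below.
   Context: Monoidal functors are lax: a functor $F$ with a morphism $m_I:I\to FI$ and a natural transformation $m_{X,Y}:FX\otimes FY\to F(X\otimes Y)$ satisfying the usual coherence. A coalgebra for a comonad $!$ is a pair $(A,\alpha:A\to!A)$ with $\varepsilon_A\circ\alpha=id$ and $\delta_A\circ\alpha=!\alpha\circ\alpha$. Associators and unitors are suppressed below. A linear exponential comonad on a monoidal category $(\mathcal{C},\otimes,I)$ is a monoidal comonad $(!,\delta,\varepsilon,m,m_I)$ (i.e. a comonad $(!,\delta:!\Rightarrow!!,\varepsilon:!\Rightarrow\mathrm{Id})$ with $!$ a lax monoidal functor with structure $m_{X,Y}:!X\otimes!Y\to!(X\otimes Y)$, $m_I:I\to!I$, and $\delta,\varepsilon$ monoidal natural transformations), equipped with a monoidal natural transformation $e_X:!X\to I$ (i.e. natural, with $e_{X\otimes Y}\circ m_{X,Y}=e_X\otimes e_Y$ and $e_I\circ m_I=id_I$) and a natural transformation $d_X:!X\to!X\otimes!X$ such that, defining $$\sigma_{X,Y}=(\varepsilon_{!Y}\otimes\varepsilon_{!X})\circ(!(e_X\otimes id)\otimes!(id\otimes e_Y))\circ d_{!X\otimes!Y}\circ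 m_{!X,!Y}\circ(\delta_X\otimes\delta_Y):!X\otimes!Y\to!Y\otimes!X,$$ the following hold for all $X,Y,Z$: (1) the two morphisms $!X\otimes!X\otimes!Y\otimes!Y\otimes!Z\otimes!Z\to!(X\otimes Y\otimes Z)\otimes!(X\otimes Y\otimes Z)$ given by $(m_{X\otimes Y,Z}\otimes m_{X\otimes Y,Z})\circ(id\otimes\sigma_{X\otimes Y,Z}\otimes id)\circ(m_{X,Y}\otimes m_{X,Y}\otimes id\otimes id)\circ(id\otimes\sigma_{X,Y}\otimes id\otimes id\otimes id)$ and $(m_{X,Y\otimes Z}\otimes m_{X,Y\otimes Z})\circ(id\otimes\sigma_{X,Y\otimes Z}\otimes id)\circ(id\otimes id\otimes m_{Y,Z}\otimes m_{Y,Z})\circ(id\otimes id\otimes id\otimes\sigma_{Y,Z}\otimes id)$ are equal; (2) $m_{!Y,!X}\circ\sigma_{!X,!Y}=!\sigma_{X,Y}\circ m_{!X,!Y}$; (3) $\sigma_{X,Y}$ is invertible with $\sigma_{X,Y}^{-1}=\sigma_{Y,X}$; (4) $(\sigma_{X,Z}\otimes id_{!Y})\circ(id_{!X}\otimes\sigma_{Y,Z})=(id_{!Z}\otimes\varepsilon_{!X\otimes!Y})\circ\sigma_{!X\otimes!Y,Z}\circ(m_{!X,!Y}\otimes id_{!Z})\circ(\delta_X\otimes\delta_Y\otimes id_{!Z})$; (5) $d_{X\otimes Y}\circ m_{X,Y}=(m_{X,Y}\otimes m_{X,Y})\circ(id_{!X}\otimes\sigma_{X,Y}\otimes id_{!Y})\circ(d_X\otimes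 d_Y)$ and $d_I\circ m_I=m_I\otimes m_I$; (6) $(!X,d_X,e_X)$ is a comonoid in $\mathcal{C}$; (7) $e_X$ is a coalgebra morphism from $(!X,\delta_X)$ to $(I,m_I)$, i.e. $m_I\circ e_X=!e_X\circ\delta_X$, and $d_X$ is a coalgebra morphism from $(!X,\delta_X)$ to $(!X\otimes!X,m_{!X,!X}\circ(\delta_X\otimes\delta_X))$, i.e. $m_{!X,!X}\circ(\delta_X\otimes\delta_X)\circ d_X=!d_X\circ\delta_X$; (8) $\delta_X$ is a comonoid morphism from $(!X,d_X,e_X)$ to $(!!X,d_{!X},e_{!X})$, i.e. $d_{!X}\circ\delta_X=(\delta_X\otimes\delta_X)\circ d_X$ and $e_{!X}\circ\delta_X=e_X$. A symmetric linear exponential comonad on a symmetric monoidal category $\mathcal{C}$ is a symmetric monoidal comonad $(!,\delta,\varepsilon,m,m_I)$ (a monoidal comonad whose structure $m$ commutes with the symmetry) equipped with monoidal natural transformations $d_X:!X\to !X\otimes !X$ and $e_X:!X\to I$ (where $X\mapsto !X\otimes !X$ is monoidal via $m$ and the symmetry, and the constant functor $I$ is monoidal via unitors) such that for each $X$: $(!X,d_X,e_X)$ is a commutative comonoid; $d_X$ is a coalgebra morphism from $(!X,\delta_X)$ to $(!X\otimes !X,m_{!X,!X}\circ(\delta_X\otimes\delta_X))$; $e_X$ is a coalgebra morphism from $(!X,\delta_X)$ to $(I,m_I)$; and $\delta_X$ is a comonoid morphism from $(!X,d_X,e_X)$ to $(!!X,d_{!X},e_{!X})$. *)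

Set Implicit Arguments.
Unset Strict Implicit.

Declare Scope cat_scope.
Delimit Scope cat_scope with cat.
Open Scope cat_scope.

Record Category := {
  ob :> Type;
  hom : ob -> ob -> Type;
  idm : forall a, hom a a;
  comp : forall a b c, hom b c -> hom a b -> hom a c;
  comp_idl : forall a b (f : hom a b), comp (idm b) f = f;
  comp_idr : forall a b (f : hom a b), comp f (idm a) = f;
  comp_assoc : forall a b c d (h : hom c d) (g : hom b c) (f : hom a b),
      comp h (comp g f) = comp (comp h g) f
}.
Arguments hom {_} _ _.
Arguments idm {_} _.
Arguments comp {_ _ _ _} _ _.
Notation "g ∘ f" := (comp g f) (at level 40, left associativity) : cat_scope.

Record MonoidalStructure (C : Category) := {
  tens : C -> C -> C;
  tensm : forall a b a' b', hom a b -> hom a' b' -> hom (tens a a') (tens b b');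
  unit : C;
  assoc : forall a b c, hom (tens (tens a b) c) (tens a (tens b c));
  assoc_inv : forall a b c, hom (tens a (tens b c)) (tens (tens a b) c);
  lunit : forall a, hom (tens unit a) a;
  lunit_inv : forall a, hom a (tens unit a);
  runit : forall a, hom (tens a unit) a;
  runit_inv : forall a, hom a (tens a unit)
}.
Arguments tens {_} _ _ _.
Arguments tensm {_} _ {_ _ _ _} _ _.
Arguments unit {_} _.
Arguments assoc {_} _ _ _ _.
Arguments assoc_inv {_} _ _ _ _.
Arguments lunit {_} _ _.
Arguments lunit_inv {_} _ _.
Arguments runit {_} _ _.
Arguments runit_inv {_} _ _.

Section MonoidalLaws.
Variable C : Category.
Variable T : MonoidalStructure C.
Local Notation "a ⊗ b" := (tens T a b) (at level 30, right associativity).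
Local Notation "f ⊠ g" := (tensm T f g) (at level 30, right associativity).
Local Notation I := (unit T).

Record is_monoidal : Prop := {
  tensm_id : forall a b, idm a ⊠ idm b = idm (a ⊗ b);
  tensm_comp : forall a1 b1 c1 a2 b2 c2 (f1 : hom a1 b1) (g1 : hom b1 c1)
      (f2 : hom a2 b2) (g2 : hom b2 c2),
      (g1 ∘ f1) ⊠ (g2 ∘ f2) = (g1 ⊠ g2) ∘ (f1 ⊠ f2);
  assoc_nat : forall a1 a2 a3 b1 b2 b3 (f1 : hom a1 b1) (f2 : hom a2 b2)
      (f3 : hom a3 b3),
      assoc T b1 b2 b3 ∘ ((f1 ⊠ f2) ⊠ f3) = (f1 ⊠ (f2 ⊠ f3)) ∘ assoc T a1 a2 a3;
  assoc_iso1 : forall a b c, assoc_inv T a b c ∘ assoc T a b c = idm _;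
  assoc_iso2 : forall a b c, assoc T a b c ∘ assoc_inv T a b c = idm _;
  lunit_nat : forall a b (f : hom a b), lunit T b ∘ (idm I ⊠ f) = f ∘ lunit T a;
  lunit_iso1 : forall a, lunit_inv T a ∘ lunit T a = idm _;
  lunit_iso2 : forall a, lunit T a ∘ lunit_inv T a = idm _;
  runit_nat : forall a b (f : hom a b), runit T b ∘ (f ⊠ idm I) = f ∘ runit T a;
  runit_iso1 : forall a, runit_inv T a ∘ runit T a = idm _;
  runit_iso2 : forall a, runit T a ∘ runit_inv T a = idm _;
  pentagon : forall a b c d,
      assoc T a b (c ⊗ d) ∘ assoc T (a ⊗ b) c d
      = (idm a ⊠ assoc T b c d) ∘ assoc T a (b ⊗ c) d ∘ (assoc T a b c ⊠ idm d);
  triangle : forall a b,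
      (idm a ⊠ lunit T b) ∘ assoc T a I b = runit T a ⊠ idm b
}.
End MonoidalLaws.

Record MonoidalCategory := {
  mcat :> Category;
  mstr : MonoidalStructure mcat;
  mlaws : is_monoidal mstr
}.

Section SymmetricLaws.
Variable M : MonoidalCategory.
Local Notation "a ⊗ b" := (tens (mstr M) a b) (at level 30, right associativity).
Local Notation "f ⊠ g" := (tensm (mstr M) f g) (at level 30, right associativity).

Record is_symmetry (c : forall a b : M, hom (a ⊗ b) (b ⊗ a)) : Prop := {
  sym_nat : forall a1 a2 b1 b2 (f : hom a1 b1) (g : hom a2 b2),
      c b1 b2 ∘ (f ⊠ g) = (g ⊠ f) ∘ c a1 a2;
  sym_inv : forall a b, c b a ∘ c a b = idm (a ⊗ b);
  sym_hexagon : forall a b d,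
      assoc (mstr M) b d a ∘ c a (b ⊗ d) ∘ assoc (mstr M) a b d
      = (idm b ⊠ c a d) ∘ assoc (mstr M) b a d ∘ (c a b ⊠ idm d)
}.
End SymmetricLaws.

Record SymmetricMonoidalCategory := {
  smon :> MonoidalCategory;
  sym : forall a b : smon, hom (tens (mstr smon) a b) (tens (mstr smon) b a);
  sym_laws : is_symmetry sym
}.
Arguments sym : clear implicits.

Record LECStructure (M : MonoidalCategory) := {
  bang : M -> M;
  bangm : forall a b : M, hom a b -> hom (bang a) (bang b);
  delta : forall a, hom (bang a) (bang (bang a));
  eps : forall a, hom (bang a) a;
  mm : forall a b, hom (tens (mstr M) (bang a) (bang b)) (bang (tens (mstr M) a b));
  mI : hom (unit (mstr M)) (bang (unit (mstr M)));
  dd : forall a, hom (bang a) (tens (mstr M) (bang a) (bang a));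
  ee : forall a, hom (bang a) (unit (mstr M))
}.
Arguments bang {_} _ _.
Arguments bangm {_} _ {_ _} _.
Arguments delta {_} _ _.
Arguments eps {_} _ _.
Arguments mm {_} _ _ _.
Arguments mI {_} _.
Arguments dd {_} _ _.
Arguments ee {_} _ _.

Section LEC.
Variable M : MonoidalCategory.
Local Notation "a ⊗ b" := (tens (mstr M) a b) (at level 30, right associativity).
Local Notation "f ⊠ g" := (tensm (mstr M) f g) (at level 30, right associativity).
Local Notation I := (unit (mstr M)).
Local Notation al := (assoc (mstr M)).
Local Notation al' := (assoc_inv (mstr M)).
Local Notation lu := (lunit (mstr M)).
Local Notation lu' := (lunit_inv (mstr M)).
Local Notation ru := (runit (mstr M)).

(* "id ⊗ f ⊗ id" in the middle of a 4-fold tensor product: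
   (P ⊗ Q) ⊗ (R ⊗ S) --> (P ⊗ Q') ⊗ (R' ⊗ S), for f : Q ⊗ R --> Q' ⊗ R'. *)
Definition midmap (P Q R S Q' R' : M) (f : hom (Q ⊗ R) (Q' ⊗ R')) :
    hom ((P ⊗ Q) ⊗ (R ⊗ S)) ((P ⊗ Q') ⊗ (R' ⊗ S)) :=
  al' P Q' (R' ⊗ S) ∘ (idm P ⊠ al Q' R' S) ∘ (idm P ⊠ (f ⊠ idm S))
  ∘ (idm P ⊠ al' Q R S) ∘ al P Q (R ⊗ S).

Variable L : LECStructure M.
Local Notation bn := (bang L).
Local Notation bm := (bangm L).
Local Notation dl := (delta L).
Local Notation ep := (eps L).
Local Notation m := (mm L).
Local Notation mi := (mI L).
Local Notation d := (dd L).
Local Notation e := (ee L).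

Record is_monoidal_comonad : Prop := {
  bang_id : forall a, bm (idm a) = idm (bn a);
  bang_comp : forall a b c (f : hom a b) (g : hom b c), bm (g ∘ f) = bm g ∘ bm f;
  delta_nat : forall a b (f : hom a b), dl b ∘ bm f = bm (bm f) ∘ dl a;
  eps_nat : forall a b (f : hom a b), ep b ∘ bm f = f ∘ ep a;
  comonad_counit_l : forall a, ep (bn a) ∘ dl a = idm (bn a);
  comonad_counit_r : forall a, bm (ep a) ∘ dl a = idm (bn a);
  comonad_coassoc : forall a, dl (bn a) ∘ dl a = bm (dl a) ∘ dl a;
  m_nat : forall a1 a2 b1 b2 (f : hom a1 b1) (g : hom a2 b2),
      m b1 b2 ∘ (bm f ⊠ bm g) = bm (f ⊠ g) ∘ m a1 a2;
  m_assoc : forall a b c,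
      bm (al a b c) ∘ m (a ⊗ b) c ∘ (m a b ⊠ idm (bn c))
      = m a (b ⊗ c) ∘ (idm (bn a) ⊠ m b c) ∘ al (bn a) (bn b) (bn c);
  m_lunit : forall a, bm (lu a) ∘ m I a ∘ (mi ⊠ idm (bn a)) = lu (bn a);
  m_runit : forall a, bm (ru a) ∘ m a I ∘ (idm (bn a) ⊠ mi) = ru (bn a);
  delta_monoidal : forall a b,
      dl (a ⊗ b) ∘ m a b = bm (m a b) ∘ m (bn a) (bn b) ∘ (dl a ⊠ dl b);
  delta_monoidal_unit : dl I ∘ mi = bm mi ∘ mi;
  eps_monoidal : forall a b, ep (a ⊗ b) ∘ m a b = ep a ⊠ ep b;
  eps_monoidal_unit : ep I ∘ mi = idm I
}.

Record e_monoidal_nat : Prop := {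
  e_nat : forall a b (f : hom a b), e b ∘ bm f = e a;
  e_monoidal : forall a b, e (a ⊗ b) ∘ m a b = lu I ∘ (e a ⊠ e b);
  e_monoidal_unit : e I ∘ mi = idm I
}.

Definition d_nat : Prop :=
  forall a b (f : hom a b), d b ∘ bm f = (bm f ⊠ bm f) ∘ d a.

Definition sigma (X Y : M) : hom (bn X ⊗ bn Y) (bn Y ⊗ bn X) :=
  (ep (bn Y) ⊠ ep (bn X))
  ∘ (bm (lu (bn Y) ∘ (e X ⊠ idm (bn Y))) ⊠ bm (ru (bn X) ∘ (idm (bn X) ⊠ e Y)))
  ∘ d (bn X ⊗ bn Y) ∘ m (bn X) (bn Y) ∘ (dl X ⊠ dl Y).

Record comonoid_laws : Prop := {
  d_coassoc : forall a, al (bn a) (bn a) (bn a) ∘ (d a ⊠ idm (bn a)) ∘ d a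
                        = (idm (bn a) ⊠ d a) ∘ d a;
  d_counit_l : forall a, lu (bn a) ∘ (e a ⊠ idm (bn a)) ∘ d a = idm (bn a);
  d_counit_r : forall a, ru (bn a) ∘ (idm (bn a) ⊠ e a) ∘ d a = idm (bn a)
}.

Record coalgebra_morphism_laws : Prop := {
  e_coalg : forall a, mi ∘ e a = bm (e a) ∘ dl a;
  d_coalg : forall a, m (bn a) (bn a) ∘ (dl a ⊠ dl a) ∘ d a = bm (d a) ∘ dl a
}.

Record delta_comonoid_morphism_laws : Prop := {
  delta_d : forall a, d (bn a) ∘ dl a = (dl a ⊠ dl a) ∘ d a;
  delta_e : forall a, e (bn a) ∘ dl a = e a
}.

Record is_linear_exponential_comonad : Prop := {
  lec_monoidal_comonad : is_monoidal_comonad;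
  lec_e : e_monoidal_nat;
  lec_d_nat : d_nat;
  lec_sigma_assoc : forall X Y Z,
      (bm (al X Y Z) ⊠ bm (al X Y Z))
      ∘ (m (X ⊗ Y) Z ⊠ m (X ⊗ Y) Z)
      ∘ midmap (bn (X ⊗ Y)) (bn Z) (sigma (X ⊗ Y) Z)
      ∘ ((m X Y ⊠ m X Y) ⊠ idm (bn Z ⊗ bn Z))
      ∘ (midmap (bn X) (bn Y) (sigma X Y) ⊠ idm (bn Z ⊗ bn Z))
      = (m X (Y ⊗ Z) ⊠ m X (Y ⊗ Z))
      ∘ midmap (bn X) (bn (Y ⊗ Z)) (sigma X (Y ⊗ Z))
      ∘ (idm (bn X ⊗ bn X) ⊠ (m Y Z ⊠ m Y Z))
      ∘ (idm (bn X ⊗ bn X) ⊠ midmap (bn Y) (bn Z) (sigma Y Z))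
      ∘ al (bn X ⊗ bn X) (bn Y ⊗ bn Y) (bn Z ⊗ bn Z);
  lec_sigma_m : forall X Y,
      m (bn Y) (bn X) ∘ sigma (bn X) (bn Y) = bm (sigma X Y) ∘ m (bn X) (bn Y);
  lec_sigma_inv1 : forall X Y, sigma Y X ∘ sigma X Y = idm (bn X ⊗ bn Y);
  lec_sigma_inv2 : forall X Y, sigma X Y ∘ sigma Y X = idm (bn Y ⊗ bn X);
  lec_sigma_hexagon : forall X Y Z,
      (sigma X Z ⊠ idm (bn Y)) ∘ al' (bn X) (bn Z) (bn Y)
      ∘ (idm (bn X) ⊠ sigma Y Z) ∘ al (bn X) (bn Y) (bn Z)
      = al' (bn Z) (bn X) (bn Y) ∘ (idm (bn Z) ⊠ ep (bn X ⊗ bn Y))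
      ∘ sigma (bn X ⊗ bn Y) Z ∘ (m (bn X) (bn Y) ⊠ idm (bn Z))
      ∘ ((dl X ⊠ dl Y) ⊠ idm (bn Z));
  lec_d_monoidal : forall X Y,
      d (X ⊗ Y) ∘ m X Y
      = (m X Y ⊠ m X Y) ∘ midmap (bn X) (bn Y) (sigma X Y) ∘ (d X ⊠ d Y);
  lec_d_monoidal_unit : d I ∘ mi = (mi ⊠ mi) ∘ lu' I;
  lec_comonoid : comonoid_laws;
  lec_coalg : coalgebra_morphism_laws;
  lec_delta : delta_comonoid_morphism_laws
}.

End LEC.

Section SymLEC.
Variable S : SymmetricMonoidalCategory.
Local Notation "a ⊗ b" := (tens (mstr S) a b) (at level 30, right associativity).
Local Notation "f ⊠ g" := (tensm (mstr S) f g) (at level 30, right associativity).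
Local Notation I := (unit (mstr S)).
Local Notation lu' := (lunit_inv (mstr S)).
Local Notation c := (sym S).

Variable L : LECStructure S.
Local Notation bn := (bang L).
Local Notation bm := (bangm L).
Local Notation dl := (delta L).
Local Notation m := (mm L).
Local Notation mi := (mI L).
Local Notation d := (dd L).

Record is_symmetric_linear_exponential_comonad : Prop := {
  slec_monoidal_comonad : is_monoidal_comonad L;
  slec_m_sym : forall X Y, m Y X ∘ c (bn X) (bn Y) = bm (c X Y) ∘ m X Y;
  slec_e : e_monoidal_nat L;
  (* d is a monoidal natural transformation, X |-> !X ⊗ !X being monoidal
     via m and the symmetry *)
  slec_d_nat : d_nat L;
  slec_d_monoidal : forall X Y,
      d (X ⊗ Y) ∘ m X Y
      = (m X Y ⊠ m X Y) ∘ midmap (bn X) (bn Y) (c (bn X) (bn Y)) ∘ (d X ⊠ d Y);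
  slec_d_monoidal_unit : d I ∘ mi = (mi ⊠ mi) ∘ lu' I;
  slec_comonoid : comonoid_laws L;
  slec_commutative : forall X, c (bn X) (bn X) ∘ d X = d X;
  slec_coalg : coalgebra_morphism_laws L;
  slec_delta : delta_comonoid_morphism_laws L
}.

End SymLEC.

(* sigma_{X,Y} is d_{!X ⊗ !Y} ∘ m ∘ (delta ⊗ delta) with the !X-part of the
   first copy and the !Y-part of the second erased by e and eps.  If d is
   monoidal for the symmetry c, the middle swap c commutes with these
   erasures, and delta being a comonoid morphism together with the counit
   laws of d leaves exactly c_{!X,!Y}.  Conversely, if sigma = c, axioms (2)
   and (5) become the symmetry of m (after precomposing with !eps ∘ delta =
   id) and the monoidality of d, while commutativity of the comonoid !X is
   sigma_{X,X} ∘ d_X = d_X, which holds in every linear exponential comonad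
   because d_X is a coalgebra morphism. *)

Section MonoidalCoherence.
Variable M : MonoidalCategory.
Local Notation "a ⊗ b" := (tens (mstr M) a b) (at level 30, right associativity).
Local Notation "f ⊠ g" := (tensm (mstr M) f g) (at level 30, right associativity).
Local Notation I := (unit (mstr M)).
Local Notation al := (assoc (mstr M)).
Local Notation al' := (assoc_inv (mstr M)).
Local Notation lu := (lunit (mstr M)).
Local Notation ru := (runit (mstr M)).
Let HM := mlaws M.

Lemma split_mono_cancel {a b c : M} (h : hom b c) (h' : hom c b) (f g : hom a b) :
  h' ∘ h = idm b -> h ∘ f = h ∘ g -> f = g.
Proof.
  intros Hh Hfg. rewrite <- (comp_idl f), <- (comp_idl g), <- Hh,
    <- !comp_assoc, Hfg. reflexivity.
Qed.

Lemma split_epi_cancel {a b c : M} (h : hom a b) (h' : hom b a) (f g : hom b c) :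
  h ∘ h' = idm b -> f ∘ h = g ∘ h -> f = g.
Proof.
  intros Hh Hfg. rewrite <- (comp_idr f), <- (comp_idr g), <- Hh,
    !comp_assoc, Hfg. reflexivity.
Qed.

Lemma comp_tensm {a1 b1 c1 a2 b2 c2 : M} (f1 : hom a1 b1) (g1 : hom b1 c1)
      (f2 : hom a2 b2) (g2 : hom b2 c2) :
  (g1 ⊠ g2) ∘ (f1 ⊠ f2) = (g1 ∘ f1) ⊠ (g2 ∘ f2).
Proof. symmetry. apply (tensm_comp HM). Qed.

Lemma tensm_idm (a b : M) : idm a ⊠ idm b = idm (a ⊗ b).
Proof. apply (tensm_id HM). Qed.

Lemma tensm_compl {a b c d : M} (f : hom a b) (g : hom b c) :
  (g ∘ f) ⊠ idm d = (g ⊠ idm d) ∘ (f ⊠ idm d).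
Proof. rewrite comp_tensm, comp_idl. reflexivity. Qed.

Lemma tensm_compr {a b c d : M} (f : hom a b) (g : hom b c) :
  idm d ⊠ (g ∘ f) = (idm d ⊠ g) ∘ (idm d ⊠ f).
Proof. rewrite comp_tensm, comp_idl. reflexivity. Qed.

Lemma comp_tensm_idl {a b c d e : M} (f : hom a b) (g : hom d e) (h : hom c d) :
  (f ⊠ g) ∘ (idm a ⊠ h) = f ⊠ (g ∘ h).
Proof. rewrite comp_tensm, comp_idr. reflexivity. Qed.

Lemma comp_idm_tensm {a b c d e : M} (f : hom a b) (g : hom c d) (h : hom d e) :
  (idm b ⊠ h) ∘ (f ⊠ g) = f ⊠ (h ∘ g).
Proof. rewrite comp_tensm, comp_idl. reflexivity. Qed.

Lemma tensm_unitr_inj {a b : M} (f g : hom a b) : f ⊠ idm I = g ⊠ idm I -> f = g.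
Proof.
  intro Hfg. eapply split_epi_cancel; [apply (runit_iso2 HM a)|].
  rewrite <- !(runit_nat HM), Hfg. reflexivity.
Qed.

Lemma tensm_unitl_inj {a b : M} (f g : hom a b) : idm I ⊠ f = idm I ⊠ g -> f = g.
Proof.
  intro Hfg. eapply split_epi_cancel; [apply (lunit_iso2 HM a)|].
  rewrite <- !(lunit_nat HM), Hfg. reflexivity.
Qed.

Lemma assoc_inv_nat {a1 a2 a3 b1 b2 b3 : M} (f1 : hom a1 b1) (f2 : hom a2 b2)
      (f3 : hom a3 b3) :
  al' b1 b2 b3 ∘ (f1 ⊠ (f2 ⊠ f3)) = ((f1 ⊠ f2) ⊠ f3) ∘ al' a1 a2 a3.
Proof.
  eapply split_mono_cancel; [apply (assoc_iso1 HM)|].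
  rewrite comp_assoc, (assoc_iso2 HM), comp_idl, comp_assoc, (assoc_nat HM),
    <- comp_assoc, (assoc_iso2 HM), comp_idr. reflexivity.
Qed.

(* Kelly's consequences of the pentagon and triangle axioms. *)
Lemma runit_tens_assoc (a b : M) : (idm a ⊠ ru b) ∘ al a b I = ru (a ⊗ b).
Proof.
  apply tensm_unitr_inj.
  rewrite <- (triangle HM).
  eapply split_mono_cancel; [apply (assoc_iso1 HM a b I)|].
  rewrite (comp_assoc (al a b I) (idm (a ⊗ b) ⊠ lu I)), <- (tensm_idm a b),
    (assoc_nat HM), <- (comp_assoc _ (al a b (I ⊗ I))), (pentagon HM), !comp_assoc,
    (comp_tensm (idm a) (idm a) (al b I I) (idm b ⊠ lu I)), comp_idl, (triangle HM),
    <- (assoc_nat HM), <- comp_assoc, comp_tensm, comp_idl.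
  reflexivity.
Qed.

Lemma lunit_tens_assoc (a b : M) : lu (a ⊗ b) ∘ al I a b = lu a ⊠ idm b.
Proof.
  apply tensm_unitl_inj.
  assert (Hassoc : (al I I a ⊠ idm b) ∘ (al' I I a ⊠ idm b) = idm _)
    by (rewrite comp_tensm, (assoc_iso2 HM), comp_idl, tensm_idm; reflexivity).
  eapply split_epi_cancel; [apply (assoc_iso2 HM I (I ⊗ a) b)|].
  eapply split_epi_cancel; [exact Hassoc|].
  rewrite tensm_compr,
    <- (comp_assoc (idm I ⊠ lu (a ⊗ b)) (idm I ⊠ al I a b) (al I (I ⊗ a) b)),
    <- (comp_assoc (idm I ⊠ lu (a ⊗ b)) _ (al I I a ⊠ idm b)), <- (pentagon HM),
    comp_assoc, (triangle HM), <- (tensm_idm a b), <- (assoc_nat HM),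
    <- (triangle HM), tensm_compl, comp_assoc, (assoc_nat HM).
  reflexivity.
Qed.

Lemma lunit_runit_assoc (Q R : M) :
  (lu Q ⊠ ru R) ∘ al' I Q (R ⊗ I) ∘ (idm I ⊠ al Q R I)
  = lu (Q ⊗ R) ∘ (idm I ⊠ ru (Q ⊗ R)).
Proof.
  assert (Hsplit : lu Q ⊠ ru R
                   = lu (Q ⊗ R) ∘ (idm I ⊠ (idm Q ⊠ ru R)) ∘ al I Q (R ⊗ I)).
  { rewrite (lunit_nat HM), <- comp_assoc, lunit_tens_assoc, comp_tensm,
      comp_idl, comp_idr. reflexivity. }
  rewrite Hsplit, <- (comp_assoc _ (al I Q (R ⊗ I))), (assoc_iso2 HM), comp_idr,
    <- comp_assoc, comp_idm_tensm, runit_tens_assoc.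
  reflexivity.
Qed.

Lemma midmap_unit {Q R Q' R' : M} (f : hom (Q ⊗ R) (Q' ⊗ R')) :
  (lu Q' ⊠ ru R') ∘ midmap I I f = f ∘ (lu Q ⊠ ru R).
Proof.
  unfold midmap. rewrite !comp_assoc, lunit_runit_assoc,
    <- (comp_assoc (lu (Q' ⊗ R'))), comp_idm_tensm, (runit_nat HM),
    <- comp_idm_tensm, comp_assoc, (lunit_nat HM),
    <- (comp_assoc f (lu (Q ⊗ R))), <- lunit_runit_assoc, !comp_assoc,
    <- (comp_assoc _ (idm I ⊠ al Q R I)), comp_idm_tensm, (assoc_iso2 HM),
    tensm_idm, comp_idr, <- (comp_assoc _ (al' I Q (R ⊗ I))), (assoc_iso1 HM),
    comp_idr.
  reflexivity.
Qed.

Lemma midmap_nat {P Q R S P' S' Q2 R2 Q' R' Q'2 R'2 : M}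
  (f1 : hom P P') (f4 : hom S S') (g2 : hom Q Q2) (g3 : hom R R2)
  (k2 : hom Q' Q'2) (k3 : hom R' R'2)
  (h : hom (Q ⊗ R) (Q' ⊗ R')) (h' : hom (Q2 ⊗ R2) (Q'2 ⊗ R'2)) :
  (k2 ⊠ k3) ∘ h = h' ∘ (g2 ⊠ g3) ->
  ((f1 ⊠ k2) ⊠ (k3 ⊠ f4)) ∘ midmap P S h
  = midmap P' S' h' ∘ ((f1 ⊠ g2) ⊠ (g3 ⊠ f4)).
Proof.
  intro Hh. unfold midmap.
  rewrite !comp_assoc, <- assoc_inv_nat,
    <- (comp_assoc (al' P' Q'2 (R'2 ⊗ S'))), comp_tensm_idl,
    <- (comp_assoc (al' P' Q'2 (R'2 ⊗ S'))), comp_tensm_idl,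
    <- (comp_assoc (al' P' Q'2 (R'2 ⊗ S'))), comp_tensm_idl,
    <- (comp_assoc _ (al P' Q2 (R2 ⊗ S'))), (assoc_nat HM), comp_assoc,
    <- (comp_assoc _ (idm P' ⊠ al' Q2 R2 S')), comp_idm_tensm,
    <- (comp_assoc _ (idm P' ⊠ h' ⊠ idm S')), comp_idm_tensm,
    <- (comp_assoc _ (idm P' ⊠ al Q'2 R'2 S')), comp_idm_tensm.
  do 3 f_equal.
  rewrite <- (assoc_nat HM), assoc_inv_nat, !comp_assoc,
    <- (comp_assoc (al Q'2 R'2 S') _ (h ⊠ idm S)),
    <- (comp_assoc (al Q'2 R'2 S') (h' ⊠ idm S')), !comp_tensm, comp_idl,
    comp_idr, Hh.
  reflexivity.
Qed.

End MonoidalCoherence.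

Section LinearExponential.
Variable M : MonoidalCategory.
Variable L : LECStructure M.
Local Notation "a ⊗ b" := (tens (mstr M) a b) (at level 30, right associativity).
Local Notation "f ⊠ g" := (tensm (mstr M) f g) (at level 30, right associativity).
Local Notation lu := (lunit (mstr M)).
Local Notation ru := (runit (mstr M)).
Local Notation bn := (bang L).
Local Notation bm := (bangm L).
Local Notation dl := (delta L).
Local Notation ep := (eps L).
Local Notation m := (mm L).
Local Notation d := (dd L).
Local Notation e := (ee L).

Hypothesis MC : is_monoidal_comonad L.
Hypothesis Hcomonoid : comonoid_laws L.
Hypothesis Hdelta : delta_comonoid_morphism_laws L.

Lemma sigma_diag_d (Hd_nat : d_nat L) (Hcoalg : coalgebra_morphism_laws L) X :
  sigma L X X ∘ d X = d X.
Proof.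
  unfold sigma.
  rewrite <- (comp_assoc _ (dl X ⊠ dl X) (d X)), <- (comp_assoc _ (m _ _) _),
    (comp_assoc (m _ _)), (d_coalg Hcoalg), comp_assoc,
    <- (comp_assoc _ (d _) (bm (d X))), Hd_nat, !comp_assoc,
    <- (comp_assoc _ (bm _ ⊠ bm _) (bm (d X) ⊠ bm (d X))), (comp_tensm M),
    <- !(bang_comp MC), (d_counit_l Hcomonoid), (d_counit_r Hcomonoid),
    !(bang_id MC), (tensm_idm M), comp_idr, <- comp_assoc, (delta_d Hdelta),
    comp_assoc, (comp_tensm M), (comonad_counit_l MC), (tensm_idm M), comp_idl.
  reflexivity.
Qed.

Variable swap : forall a b : M, hom (a ⊗ b) (b ⊗ a).
Hypothesis swap_nat : forall a1 a2 b1 b2 (f : hom a1 b1) (g : hom a2 b2),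
  swap b1 b2 ∘ (f ⊠ g) = (g ⊠ f) ∘ swap a1 a2.

Lemma sigma_eq_swap_of_d_monoidal :
  (forall X Y, d (X ⊗ Y) ∘ m X Y
               = (m X Y ⊠ m X Y) ∘ midmap (bn X) (bn Y) (swap (bn X) (bn Y))
                 ∘ (d X ⊠ d Y)) ->
  forall X Y, sigma L X Y = swap (bn X) (bn Y).
Proof.
  intros Hd X Y. unfold sigma.
  rewrite (comp_tensm M), !(eps_nat MC), <- (comp_tensm M),
    <- (comp_assoc _ (d _) (m (bn X) (bn Y))), (Hd (bn X) (bn Y)), !comp_assoc,
    <- (comp_assoc _ (ep _ ⊠ ep _) (m _ _ ⊠ m _ _)), (comp_tensm M),
    !(eps_monoidal MC),
    <- (comp_assoc _ ((ep _ ⊠ ep _) ⊠ (ep _ ⊠ ep _)) (midmap _ _ _)).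
  rewrite (midmap_nat M _ _ (ep (bn X)) (ep (bn Y)) _ _ _ (swap (bn X) (bn Y)));
    [| symmetry; apply swap_nat].
  rewrite !comp_assoc,
    <- (comp_assoc _ (d (bn X) ⊠ _) (dl X ⊠ _)), (comp_tensm M (dl X)),
    !(delta_d Hdelta),
    <- (comp_assoc _ ((ep (bn X) ⊠ _) ⊠ _) ((_ ∘ d X) ⊠ _)),
    (comp_tensm M (_ ∘ d X)), !comp_assoc, (comp_tensm M (dl X)),
    !(comonad_counit_l MC), (tensm_idm M), !comp_idl, (comp_tensm M (dl Y)),
    (comonad_counit_l MC), (tensm_idm M), comp_idl,
    <- (comp_tensm M (e X ⊠ _)), <- (comp_assoc (lu _ ⊠ ru _)).
  rewrite (midmap_nat M (e X) (e Y) (idm _) (idm _) (idm _) (idm _) _ (swap (bn X) (bn Y)));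
    [| rewrite !(tensm_idm M), comp_idl, comp_idr; reflexivity].
  rewrite comp_assoc, (midmap_unit M), <- !comp_assoc, !(comp_tensm M), !comp_assoc,
    (d_counit_l Hcomonoid), (d_counit_r Hcomonoid), (tensm_idm M), comp_idr.
  reflexivity.
Qed.

Lemma m_swap_of_m_swap_bang :
  (forall X Y, m (bn Y) (bn X) ∘ swap (bn (bn X)) (bn (bn Y))
               = bm (swap (bn X) (bn Y)) ∘ m (bn X) (bn Y)) ->
  forall X Y, m Y X ∘ swap (bn X) (bn Y) = bm (swap X Y) ∘ m X Y.
Proof.
  intros Hbang X Y.
  rewrite <- (comp_idr (swap (bn X) (bn Y))), <- (tensm_idm M),
    <- (comonad_counit_r MC X), <- (comonad_counit_r MC Y), <- (comp_tensm M),
    (comp_assoc (swap (bn X) (bn Y))), swap_nat, !comp_assoc, (m_nat MC),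
    <- (comp_assoc _ (m (bn Y) (bn X))), Hbang, comp_assoc, <- (bang_comp MC),
    <- swap_nat, (bang_comp MC), <- (comp_assoc _ (bm (ep X ⊠ ep Y))), <- (m_nat MC),
    <- !comp_assoc, (comp_tensm M (dl X)), !(comonad_counit_r MC), (tensm_idm M),
    comp_idr.
  reflexivity.
Qed.

End LinearExponential.

Theorem proposition4 (S : SymmetricMonoidalCategory) (L : LECStructure S)
  (HL : is_linear_exponential_comonad L) :
  is_symmetric_linear_exponential_comonad L <->
  (forall X Y : S, sigma L X Y = sym S (bang L X) (bang L Y)).
Proof.
  destruct HL as [HMC He Hd_nat _ Hsigma_m _ _ _ Hd_monoidal Hd_unit Hcomonoid
                  Hcoalg Hdelta].
  pose proof (sym_nat (sym_laws S)) as Hc_nat.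
  split.
  - intros [_ _ _ _ Hd_sym _ _ _ _ _].
    exact (sigma_eq_swap_of_d_monoidal _ _ HMC Hcomonoid Hdelta _ Hc_nat Hd_sym).
  - intros Hsigma_c. constructor; auto.
    + apply (m_swap_of_m_swap_bang _ _ HMC _ Hc_nat).
      intros X Y. rewrite <- !Hsigma_c. apply Hsigma_m.
    + intros X Y. rewrite Hd_monoidal, Hsigma_c. reflexivity.
    + intro X. rewrite <- Hsigma_c.
      exact (sigma_diag_d _ _ HMC Hcomonoid Hdelta Hd_nat Hcoalg X).
Qed.
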